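(* For every integer $m\ge1$, $$\sum_{i=0}^{\lfloor (m-1)/2\rfloor}(-1)^i\binom{2m}{m-1-2i}=\sum_{k=0}^{m-1}2^{m-1-k}\binom{2k}{k}.$$ *)

From HB Require Import structures.
From mathcomp Require Import all_boot all_order all_algebra.

From HB Require Import structures.
From mathcomp Require Import all_boot all_order all_algebra zify ring.
Import GRing.Theory Num.Theory.

(* Let [a m] be the alternating sum on the left.  Applying Pascal's rule twice
   to [C(2m+2, m-1-2i)] writes [a (m+1)] as [2 a m] plus an alternating sum of
   consecutive pairs [C(2m, m-2i) + C(2m, m-2i-2)], which telescopes to the
   central coefficient [C(2m, m)].  The right-hand side obeys the same
   recurrence [s (m+1) = 2 s m + C(2m, m)] and both vanish at [m = 0]. *)

(* [C(2m, m - d)], made [0] once [d > m] instead of truncating [m - d] to 0. *)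
Definition bin_below_centre (m d : nat) : nat :=
  if (d <= m)%N then 'C(2 * m, m - d) else 0.

Lemma bin_below_centre_in m d : (d <= m)%N -> bin_below_centre m d = 'C(2 * m, m - d).
Proof. by rewrite /bin_below_centre => ->. Qed.

Lemma bin_below_centre_out m d : (m < d)%N -> bin_below_centre m d = 0.
Proof. by rewrite /bin_below_centre ltnNge => /negbTE ->. Qed.

Lemma binSS n k : 'C(n.+2, k.+2) = 'C(n, k.+2) + 2 * 'C(n, k.+1) + 'C(n, k).
Proof. by rewrite !binS; lia. Qed.

Lemma bin_below_centreS m d :
  bin_below_centre m.+1 d.+1 =
    bin_below_centre m d + 2 * bin_below_centre m d.+1 + bin_below_centre m d.+2.
Proof.
have [lt_md | le_dm] := ltnP m d.
  by rewrite !bin_below_centre_out // ltnW // ltnW.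
have [j ->] : exists j, m = (j + d)%N by exists (m - d)%N; rewrite subnK.
have two_mS n : (2 * n.+1 = (2 * n).+2)%N by rewrite mulnS.
rewrite (@bin_below_centre_in _ d.+1) ?ltnS ?leq_addl // (@bin_below_centre_in _ d) ?leq_addl //.
rewrite subSS addnK two_mS.
case: j => [|[|j]].
- by rewrite add0n !bin_below_centre_out ?ltnS ?leqnSn // !bin0.
- rewrite add1n bin_below_centre_in // bin_below_centre_out // subnn.
  by rewrite !binS !bin0; lia.
- rewrite !bin_below_centre_in; [|lia..].
  by rewrite !subnS addnK binSS.
Qed.

Local Open Scope ring_scope.

Lemma sum_alternating_pairs (R : pzRingType) (f : nat -> R) n :
  \sum_(0 <= i < n) (-1) ^+ i * (f i + f i.+1) = f 0%N - (-1) ^+ n * f n.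
Proof.
rewrite -[f 0%N]mul1r -(expr0 (-1 : R)) -opprB.
rewrite -(telescope_sumr (fun k => (-1) ^+ k * f k) (leq0n n)) -sumrN.
by apply: eq_bigr => i _; rewrite exprS mulN1r mulNr opprB opprK mulrDr.
Qed.

Definition alt_bin_sum (m : nat) : int :=
  \sum_(0 <= i < m) (-1) ^+ i * (bin_below_centre m (2 * i).+1)%:Z.

Lemma alt_bin_sumS m : alt_bin_sum m.+1 = 2 * alt_bin_sum m + ('C(2 * m, m))%:Z.
Proof.
pose e i : int := (bin_below_centre m (2 * i))%:Z.
have pascal i : (bin_below_centre m.+1 (2 * i).+1)%:Z
    = e i + e i.+1 + 2 * (bin_below_centre m (2 * i).+1)%:Z.
  by rewrite bin_below_centreS /e mulnS add2n !PoszD; ring.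
rewrite /alt_bin_sum; under eq_bigr => i _ do rewrite pascal mulrDr.
rewrite big_split /= sum_alternating_pairs mulr_sumr big_nat_recr //=.
have -> : e m.+1 = 0 by rewrite /e bin_below_centre_out //; lia.
rewrite bin_below_centre_out; last by lia.
rewrite /e muln0 bin_below_centre_in // subn0 !mulr0 subr0 addr0 addrC.
by congr (_ + _); apply: eq_bigr => i _; rewrite mulrCA.
Qed.

Definition central_bin_weighted_sum (m : nat) : int :=
  \sum_(0 <= k < m) (2 ^ (m - 1 - k) * 'C(2 * k, k))%:Z.

Lemma central_bin_weighted_sumS m :
  central_bin_weighted_sum m.+1 = 2 * central_bin_weighted_sum m + ('C(2 * m, m))%:Z.
Proof.
rewrite /central_bin_weighted_sum big_nat_recr //= subSS subn0 subnn mul1n.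
congr (_ + _); rewrite mulr_sumr; apply: eq_big_nat => k /andP [_ lt_km].
by rewrite (_ : m - k = (m - 1 - k).+1)%N ?expnS -?mulnA ?PoszM //; lia.
Qed.

Lemma alt_bin_sumE m : alt_bin_sum m = central_bin_weighted_sum m.
Proof.
elim: m => [|m IHm]; first by rewrite /alt_bin_sum /central_bin_weighted_sum !big_geq.
by rewrite alt_bin_sumS central_bin_weighted_sumS IHm.
Qed.

Theorem mainTheorem8 (m : nat) (hm : (1 <= m)%N) :
  \sum_(0 <= i < ((m - 1)./2).+1) (-1) ^+ i * ('C(2 * m, m - 1 - 2 * i))%:Z
  = \sum_(0 <= k < m) (2 ^ (m - 1 - k) * 'C(2 * k, k))%:Z.
Proof.
rewrite -/(central_bin_weighted_sum m) -alt_bin_sumE /alt_bin_sum.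
have le_half_m : (((m - 1)./2).+1 <= m)%N by rewrite -divn2; lia.
have tail_vanishes : \sum_(((m - 1)./2).+1 <= i < m)
    (-1) ^+ i * (bin_below_centre m (2 * i).+1)%:Z = 0.
  rewrite big_nat_cond big1 // => i /andP [/andP [lt_half_i _] _].
  by rewrite bin_below_centre_out ?mulr0 //; move: lt_half_i; rewrite -divn2; lia.
rewrite [RHS](big_cat_nat _ le_half_m) //= tail_vanishes addr0.
apply: eq_big_nat => i /andP [_ lt_i_half].
rewrite bin_below_centre_in -?subnDA ?add1n //; move: lt_i_half; rewrite -divn2; lia.
Qed.
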